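(* Let $\mathbb{F}$ be a finite field and $C\subseteq\mathbb{F}^n$ an $(n,k)$ linear block code. Let $G$ be a $k\times n$ matrix whose rows $\mathbf{g}_1,\dots,\mathbf{g}_k$ are $k$ linearly independent rows of a characteristic matrix $X$ of $C$, with (circular) spans $(a_1,b_1],\dots,(a_k,b_k]$, and let $S=[(a_1,b_1],\dots,(a_k,b_k]]$. For $i=0,\dots,n-1$ let $M_i=\mathrm{diag}(\mu_i^1,\dots,\mu_i^k)\in\mathbb{F}^{k\times k}$, where $\mu_i^l=1$ if $i\in(a_l,b_l]$ and $\mu_i^l=0$ otherwise, and let $\ker(M_i)=\{\mathbf{u}\in\mathbb{F}^k:\mathbf{u}M_i=\mathbf{0}\}$. Let $T_{alg}$ be the tail-biting trellis whose vertices at level $i$ ($0\le i\le n-1$) are the cosets of $\ker(M_i)$ in $\mathbb{F}^k$ (equivalently, the corresponding sets of codewords $\mathbf{u}G$), and in which, for $0\le j\le n-1$, there is an edge labeled $c_j$ from a vertex $v$ at level $j$ to a vertex $w$ at level $j+1 \pmod n$ if and only if there is $\mathbf{u}\in v\cap w$ such that the codeword $\mathbf{c}=\mathbf{u}G=(c_0,\dots,c_{n-1})$ has symbol $c_j$ at position $j$. Then $T_{alg}$ is isomorphic to the KV trellis $T_{G,S}$. Moreover, if at each level $i$ each coset is represented by its least element (vectors $\mathbf{u}$ being placed in ascending order), then $T_{alg}$ is identical to $T_{G,S}$.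
   Context: Positions and levels are indexed $0,\dots,n-1$ and taken modulo $n$. For a row $\mathbf{g}$ with span $(a,b]$: $a$ and $b$ are positions with $g_a\ne0$, $g_b\ne0$, the support of $\mathbf{g}$ lies in the circular interval of positions $a,a+1,\dots,b$ (mod $n$), and $i\in(a,b]$ means $i$ lies in the circular set $\{a+1,a+2,\dots,b\}$ (mod $n$); spans with $a>b$ are circular. A characteristic matrix of $C$ (Koetter–Vardy) is an $n\times n$ matrix whose rows are codewords of $C$ with minimal (characteristic) spans such that the $n$ spans have pairwise distinct starting points and pairwise distinct ending points. The KV trellis $T_{G,S}$ is the product of the elementary tail-biting trellises $T_{\mathbf{g}_l}$ of the rows with their spans; equivalently, its vertex set at level $i$ is $\{\mathbf{u}M_i:\mathbf{u}\in\mathbb{F}^k\}$ (the vector $\mathbf{u}$ with the coordinates $l$ having $\mu_i^l=0$ set to $0$), and for each $j$ and each $\mathbf{u}\in\mathbb{F}^k$ it has an edge from $\mathbf{u}M_j$ at level $j$ to $\mathbf{u}M_{j+1}$ at level $j+1\pmod n$ labeled $\mathbf{u}\bar{\mathbf{g}}_j$, where $\bar{\mathbf{g}}_j$ is the $j$-th column of $G$. Two tail-biting trellises are isomorphic if there are bijections between their vertex sets at each level mapping edges to edges and preserving labels; ''identical'' means equal when each coset is labeled by its representative. The ordering of $\mathbb{F}^k$ is lexicographic with $0$ the least element of $\mathbb{F}$. *)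

From HB Require Import structures.
From mathcomp Require Import all_boot all_order all_algebra.
Set Implicit Arguments. Unset Strict Implicit. Unset Printing Implicit Defensive.
Import GRing.Theory.
Local Open Scope ring_scope.

Definition cdist (n : nat) (a i : 'I_n) : nat := ((i + n - a) %% n)%N.

Definition in_cint (n : nat) (a b i : 'I_n) : bool := (cdist a i <= cdist a b)%N.

(* i \in (a, b] : the circular set {a+1, ..., b} (mod n); (a,a] is empty *)
Definition in_span (n : nat) (a b i : 'I_n) : bool :=
  (0 < cdist a i)%N && (cdist a i <= cdist a b)%N.

Definition span_len (n : nat) (a b : 'I_n) : nat := cdist a b.

Definition has_span (F : fieldType) (n : nat) (x : 'rV[F]_n) (a b : 'I_n) : Prop :=
  [/\ x 0 a != 0, x 0 b != 0 & forall i, x 0 i != 0 -> in_cint a b i].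

Definition minimal_span (F : fieldType) (n : nat) (x : 'rV[F]_n) (a b : 'I_n) : Prop :=
  has_span x a b /\ forall a' b', has_span x a' b' -> (span_len a b <= span_len a' b')%N.

(* X (n x n) with spans (sa i, sb i] is a characteristic matrix of the code C
   (C given as a row space, a subspace of F^n) *)
Definition char_matrix (F : fieldType) (n : nat) (C : 'M[F]_n) (X : 'M[F]_n)
  (sa sb : 'I_n -> 'I_n) : Prop :=
  [/\ forall i, (row i X <= C)%MS,
      forall i, minimal_span (row i X) (sa i) (sb i),
      injective sa & injective sb].

Definition mu (F : fieldType) (n k : nat) (a b : 'I_k -> 'I_n) (i : 'I_n) (l : 'I_k) : F :=
  if in_span (a l) (b l) i then 1 else 0.

Definition Mmat (F : fieldType) (n k : nat) (a b : 'I_k -> 'I_n) (i : 'I_n) : 'M[F]_k :=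
  diag_mx (\row_l mu F a b i l).

(* vertex sets per level, and labeled edges from level j to level j+1 (mod n) *)
Record trellis (n : nat) (F : Type) (V : finType) := Trellis {
  tvert : 'I_n -> {set V};
  tedge : 'I_n -> V -> F -> V -> bool }.

Definition trellis_iso (n : nat) (F : Type) (V1 V2 : finType)
  (T1 : trellis n F V1) (T2 : trellis n F V2) : Prop :=
  exists phi : 'I_n -> V1 -> V2,
    (forall i, {in tvert T1 i &, injective (phi i)} /\
               phi i @: tvert T1 i = tvert T2 i) /\
    (forall j v c w, v \in tvert T1 j -> w \in tvert T1 (ordS j) ->
        tedge T1 j v c w = tedge T2 j (phi j v) c (phi (ordS j) w)).

Definition relabel (n : nat) (F : Type) (V1 V2 : finType)
  (T : trellis n F V1) (rep : 'I_n -> V1 -> V2) : trellis n F V2 :=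
  Trellis (fun i => rep i @: tvert T i)
    (fun j x c y => [exists A, exists B,
        [&& A \in tvert T j, B \in tvert T (ordS j), rep j A == x,
            rep (ordS j) B == y & tedge T j A c B]]).

Definition trellis_identical (n : nat) (F : Type) (V : finType)
  (T1 T2 : trellis n F V) : Prop :=
  (forall i, tvert T1 i = tvert T2 i) /\
  (forall j x c y, tedge T1 j x c y = tedge T2 j x c y).

Definition kcoset (F : finFieldType) (k : nat) (M : 'M[F]_k) (u : 'rV[F]_k)
  : {set 'rV[F]_k} := [set v | (v - u) *m M == 0].

Definition T_alg (F : finFieldType) (n k : nat) (G : 'M[F]_(k, n))
  (a b : 'I_k -> 'I_n) : trellis n F {set 'rV[F]_k} :=
  let V := fun i => [set kcoset (Mmat F a b i) u | u : 'rV[F]_k] in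
  Trellis V (fun j A c B =>
    [&& A \in V j, B \in V (ordS j) &
        [exists u, [&& u \in A, u \in B & (u *m G) 0 j == c]]]).

Definition T_KV (F : finFieldType) (n k : nat) (G : 'M[F]_(k, n))
  (a b : 'I_k -> 'I_n) : trellis n F 'rV[F]_k :=
  Trellis (fun i => [set u *m Mmat F a b i | u : 'rV[F]_k])
    (fun j x c y => [exists u,
        [&& x == u *m Mmat F a b j, y == u *m Mmat F a b (ordS j) &
            (u *m G) 0 j == c]]).

Definition lex_lt (F : finType) (k : nat) (ordF : F -> nat) (u v : 'rV[F]_k) : Prop :=
  exists l : 'I_k, (forall l' : 'I_k, (l' < l)%N -> u ord0 l' = v ord0 l') /\
                   (ordF (u ord0 l) < ordF (v ord0 l))%N.

Definition least_elt (F : finType) (k : nat) (ordF : F -> nat) (A : {set 'rV[F]_k}) x :=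
  x \in A /\ forall y, y \in A -> y <> x -> lex_lt ordF x y.

(** The vertices of [T_alg] at level [i] are the cosets of [ker M_i], on which
    [u |-> u M_i] is constant; as [M_i] is a 0/1 diagonal matrix, [u M_i] lies in the
    coset of [u], so [u + ker M_i |-> u M_i] is a bijection onto the vertices of
    [T_{G,S}].  An edge of [T_alg] is witnessed by a common element [u] of two cosets,
    i.e. by an information vector with prescribed images under [M_j] and [M_{j+1}],
    which is exactly an edge of [T_{G,S}].  Moreover [u M_i] is the least element of
    its coset: it agrees with the other elements where [M_i] is 1 and is 0 elsewhere. *)
From HB Require Import structures.
From mathcomp Require Import all_boot all_order all_algebra.
Local Open Scope ring_scope.
Import GRing.Theory.

Set Implicit Arguments.
Unset Strict Implicit.
Unset Printing Implicit Defensive.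

Section ProjectionCosets.
Variables (F : finFieldType) (k : nat) (M : 'M[F]_k).

Lemma kcosetE (u v : 'rV[F]_k) : (v \in kcoset M u) = (v *m M == u *m M).
Proof. by rewrite inE mulmxBl subr_eq0. Qed.

Lemma kcoset_eq (u v : 'rV[F]_k) : (kcoset M u == kcoset M v) = (u *m M == v *m M).
Proof.
apply/eqP/eqP => [/setP/(_ u)|uvM]; first by rewrite !kcosetE eqxx => /esym/eqP.
by apply/setP => w; rewrite !kcosetE uvM.
Qed.

Hypothesis M_idem : M *m M = M.

Lemma proj_in_kcoset (u : 'rV[F]_k) : u *m M \in kcoset M u.
Proof. by rewrite kcosetE -mulmxA M_idem. Qed.

(* Every element of a coset has the same image under [M]; the [0] branch is never
   taken on cosets. *)
Definition coset_proj (A : {set 'rV[F]_k}) : 'rV[F]_k :=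
  if [pick v in A] is Some v then v *m M else 0.

Lemma coset_proj_kcoset (u : 'rV[F]_k) : coset_proj (kcoset M u) = u *m M.
Proof.
rewrite /coset_proj; case: pickP => [v|/(_ (u *m M))]; first by rewrite kcosetE => /eqP.
by rewrite proj_in_kcoset.
Qed.

End ProjectionCosets.

Section SpanMatrices.
Variables (F : fieldType) (n k : nat) (a b : 'I_k -> 'I_n).

Lemma Mmat_entry i (u : 'rV[F]_k) l : (u *m Mmat F a b i) 0 l = u 0 l * mu F a b i l.
Proof. by rewrite /Mmat mul_mx_diag !mxE. Qed.

Lemma Mmat_idem i : Mmat F a b i *m Mmat F a b i = Mmat F a b i.
Proof.
apply/matrixP => l l'; rewrite /Mmat mul_mx_diag !mxE /mu.
by case: eqP => [<-|_]; rewrite ?mul0r //; case: ifP; rewrite ?mulr1 ?mul0r.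
Qed.

End SpanMatrices.

Lemma least_kcoset_Mmat (F : finFieldType) (n k : nat) (a b : 'I_k -> 'I_n)
    (ordF : F -> nat) : (forall x, (ordF 0%R <= ordF x)%N) ->
  forall i (u x : 'rV[F]_k),
  least_elt ordF (kcoset (Mmat F a b i) u) x -> x = u *m Mmat F a b i.
Proof.
move=> ordF0 i u x [+ x_least]; rewrite kcosetE => /eqP xM.
have [//|/eqP x_neq] := eqVneq x (u *m Mmat F a b i).
have [l [_]] := x_least _ (proj_in_kcoset (Mmat_idem F a b i) u) (nesym x_neq).
move/rowP/(_ l): xM; rewrite !Mmat_entry /mu.
case: ifP => _; rewrite ?mulr1 ?mulr0; first by move=> ->; rewrite ltnn.
by rewrite ltnNge ordF0.
Qed.

Section Trellises.
Variables (F : finFieldType) (n k : nat) (G : 'M[F]_(k, n)) (a b : 'I_k -> 'I_n).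

Local Notation M := (Mmat F a b).
Local Notation Talg := (T_alg G a b).
Local Notation TKV := (T_KV G a b).

Let M_idem i : M i *m M i = M i. Proof. exact: Mmat_idem. Qed.

Lemma T_alg_vertP i A : reflect (exists u, A = kcoset (M i) u) (A \in tvert Talg i).
Proof. by apply: (iffP imsetP) => [[u _ ->]|[u ->]]; exists u. Qed.

Lemma T_alg_vert_kcoset i u : kcoset (M i) u \in tvert Talg i.
Proof. exact: imset_f. Qed.

Lemma image_T_alg_vert i (phi : {set 'rV[F]_k} -> 'rV[F]_k) :
    (forall u, phi (kcoset (M i) u) = u *m M i) ->
  phi @: tvert Talg i = tvert TKV i.
Proof.
move=> phiE; apply/setP => x; apply/imsetP/imsetP => [[_ /T_alg_vertP[u ->] ->]|[u _ ->]].
  by exists u; rewrite ?phiE.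
by exists (kcoset (M i) u); rewrite ?T_alg_vert_kcoset ?phiE.
Qed.

Lemma T_alg_edge_kcoset j u1 u2 c :
  tedge Talg j (kcoset (M j) u1) c (kcoset (M (ordS j)) u2) =
  tedge TKV j (u1 *m M j) c (u2 *m M (ordS j)).
Proof.
rewrite /= !T_alg_vert_kcoset; apply: eq_existsb => u.
by rewrite !kcosetE ![u1 *m _ == _]eq_sym ![u2 *m _ == _]eq_sym.
Qed.

Lemma T_alg_iso_KV : trellis_iso Talg TKV.
Proof.
exists (fun i => coset_proj (M i)); split=> [i|j _ c _ /T_alg_vertP[u1 ->] /T_alg_vertP[u2 ->]].
  split=> [_ _ /T_alg_vertP[u ->] /T_alg_vertP[v ->]|].
    by rewrite !(coset_proj_kcoset (M_idem i)) => /eqP; rewrite -kcoset_eq => /eqP.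
  by apply: image_T_alg_vert => u; rewrite (coset_proj_kcoset (M_idem i)).
by rewrite !(coset_proj_kcoset (M_idem _)) T_alg_edge_kcoset.
Qed.

Lemma relabel_T_alg_identical (rep : 'I_n -> {set 'rV[F]_k} -> 'rV[F]_k) :
    (forall i u, rep i (kcoset (M i) u) = u *m M i) ->
  trellis_identical (relabel Talg rep) TKV.
Proof.
move=> repE; split=> [i|j x c y]; first exact: image_T_alg_vert.
apply/existsP/idP => [[A /existsP[B]]|].
  case/and5P=> /T_alg_vertP[u1 ->] /T_alg_vertP[u2 ->] /eqP<- /eqP<-.
  by rewrite !repE T_alg_edge_kcoset.
case/existsP=> u /and3P[/eqP-> /eqP-> uc].
exists (kcoset (M j) u); apply/existsP; exists (kcoset (M (ordS j)) u).
rewrite !T_alg_vert_kcoset !repE !eqxx T_alg_edge_kcoset /=.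
by apply/existsP; exists u; rewrite !eqxx.
Qed.

End Trellises.

Theorem proposition2 (F : finFieldType) (n k : nat)
  (C : 'M[F]_n) (X : 'M[F]_n) (sa sb : 'I_n -> 'I_n) (r : 'I_k -> 'I_n) :
  \rank C = k ->
  char_matrix C X sa sb ->
  injective r ->
  row_free (rowsub r X) ->
  let G : 'M[F]_(k, n) := rowsub r X in
  let a := fun l => sa (r l) in
  let b := fun l => sb (r l) in
  trellis_iso (T_alg G a b) (T_KV G a b) /\
  (forall (ordF : F -> nat), injective ordF -> (forall x, (ordF 0%R <= ordF x)%N) ->
   forall rep : 'I_n -> {set 'rV[F]_k} -> 'rV[F]_k,
     (forall i A, A \in tvert (T_alg G a b) i -> least_elt ordF A (rep i A)) ->
     trellis_identical (relabel (T_alg G a b) rep) (T_KV G a b)).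
Proof.
move=> _ _ _ _ G a b; split; first exact: T_alg_iso_KV.
move=> ordF _ ordF0 rep rep_least; apply: relabel_T_alg_identical => i u.
exact/(least_kcoset_Mmat ordF0)/rep_least/T_alg_vert_kcoset.
Qed.
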